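(* Let $[a,b]\subset\mathbb R$, $n,m,m_d\in\mathbb N$, and let $\mathcal J=\sum_{j=0}^{m}P_j\partial_z^j$ with constant matrices $P_j\in\mathbb R^{n\times n}$ satisfying $P_j=(-1)^{j+1}P_j^\top$ for $j\in[0:m]$. Let $\mathcal I=\{(i_1,j_1),\ldots,(i_l,j_l)\}\subset[1:n]\times[0:m_d]$ be a set of distinct index pairs ordered so that $j_1\le j_2\le\cdots\le j_l$, let $H:\mathbb R^l\to\mathbb R$ be smooth, and consider the Hamiltonian functional $\mathcal H(x)=\int_a^b H\big(\partial_z^{j_1}x_{i_1}(z),\ldots,\partial_z^{j_l}x_{i_l}(z)\big)\,\mathrm dz$ for sufficiently smooth $x:[a,b]\to\mathbb R^n$. Let $x$ be a (sufficiently smooth) solution of the Hamiltonian system $\frac{\mathrm d}{\mathrm dt}x=\mathcal J\,\delta_x\mathcal H(x)$, and define the extended state $\bar x=(\partial_z^{j_1}x_{i_1},\ldots,\partial_z^{j_l}x_{i_l})^\top$ and the lifted functional $\bar{\mathcal H}(\bar x)=\int_a^b H(\bar x_1(z),\ldots,\bar x_l(z))\,\mathrm dz$, in which $\bar x_1,\ldots,\bar x_l$ are regarded as independent functions. Then $\bar x$ satisfies the Hamiltonian system $$\frac{\mathrm d}{\mathrm dt}\bar x=\mathbb J\,\delta_{\bar x}\bar{\mathcal H}(\bar x),$$ where $\mathbb J$ is the $l\times l$ matrix differential operator with $(p,q)$-entry $\mathbb J_{pq}=\partial_z^{j_p}\,\mathcal J_{i_p i_q}\,(-\partial_z)^{j_q}$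 for $p,q\in[1:l]$ (equivalently $\mathbb J=D_+\,(\mathcal J_{i_pi_q})_{p,q=1}^l\,D_-$ with $D_\pm=\operatorname{diag}((\pm\partial_z)^{j_1},\ldots,(\pm\partial_z)^{j_l})$), and $\mathbb J$ is formally skew-adjoint.
   Context: For a matrix differential operator $\mathcal J=\sum_j P_j\partial_z^j$, $\mathcal J_{ik}$ denotes the scalar differential operator $\sum_j (P_j)_{ik}\partial_z^j$. The variational derivative $\delta_x\mathcal H(x)$ of a functional $\mathcal H$ is the function defined by $\frac{d}{d\varepsilon}\big|_{\varepsilon=0}\mathcal H(x+\varepsilon\eta)=\int_a^b\langle\delta_x\mathcal H(x)(z),\eta(z)\rangle_{\mathbb R^n}\,\mathrm dz$ for all $\eta\in H_0^{m_d}([a,b],\mathbb R^n)$. Since in $\bar{\mathcal H}$ the $\bar x_k$ are independent variables, $\delta_{\bar x}\bar{\mathcal H}(\bar x)=\big(\tfrac{\partial H}{\partial y_1}(\bar x),\ldots,\tfrac{\partial H}{\partial y_l}(\bar x)\big)^\top$. A matrix differential operator $\mathbb J$ is formally skew-adjoint if it equals minus its formal $L^2$-adjoint, i.e. $\int_a^b\langle e,\mathbb J f\rangle\,\mathrm dz=-\int_a^b\langle\mathbb J e,f\rangle\,\mathrm dz$ for all smooth compactly supported $e,f$. *)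

From Stdlib Require Import Reals List Lia Lra.
From Coquelicot Require Import Coquelicot.
Open Scope R_scope.

Fixpoint sumR (n : nat) (f : nat -> R) : R :=
  match n with O => 0 | S k => sumR k f + f k end.

(* iterated partial derivative: true = d/dt, false = d/dz; the head is applied last *)
Fixpoint pd2 (s : list bool) (f : R -> R -> R) : R -> R -> R :=
  match s with
  | nil => f
  | b :: s' => if b then (fun t z => Derive (fun t' => pd2 s' f t' z) t)
               else (fun t z => Derive (fun z' => pd2 s' f t z') z)
  end.

Definition cont2 (f : R -> R -> R) (t z : R) : Prop :=
  forall eps, 0 < eps -> exists delta, 0 < delta /\
    forall t' z', Rabs (t' - t) < delta -> Rabs (z' - z) < delta ->
      Rabs (f t' z' - f t z) < eps.

Definition smooth2 (f : R -> R -> R) : Prop :=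
  forall s t z, ex_derive (fun t' => pd2 s f t' z) t /\
                ex_derive (fun z' => pd2 s f t z') z /\ cont2 (pd2 s f) t z.

Definition smooth1 (f : R -> R) : Prop :=
  forall k z, ex_derive (Derive_n f k) z /\ continuous (Derive_n f k) z.

Definition upd (v : nat -> R) (p : nat) (y : R) : nat -> R :=
  fun q => if Nat.eqb q p then y else v q.

(* H only depends on the first l coordinates, i.e. H is a function on R^l *)
Definition depends_on_first (l : nat) (F : (nat -> R) -> R) : Prop :=
  forall v w, (forall p, (p < l)%nat -> v p = w p) -> F v = F w.

Fixpoint pdN (s : list nat) (F : (nat -> R) -> R) : (nat -> R) -> R :=
  match s with
  | nil => F
  | p :: s' => fun v => Derive (fun y => pdN s' F (upd v p y)) (v p)
  end.

Definition contN (l : nat) (F : (nat -> R) -> R) (v : nat -> R) : Prop :=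
  forall eps, 0 < eps -> exists delta, 0 < delta /\
    forall w, (forall p, (p < l)%nat -> Rabs (w p - v p) < delta) ->
      Rabs (F w - F v) < eps.

Definition smoothN (l : nat) (F : (nat -> R) -> R) : Prop :=
  forall (s : list nat) (v : nat -> R), List.Forall (fun p => (p < l)%nat) s ->
    (forall p, (p < l)%nat -> ex_derive (fun y => pdN s F (upd v p y)) (v p)) /\
    contN l (pdN s F) v.

Definition test_fun (a b : R) (eta : R -> R) : Prop :=
  smooth1 eta /\ exists c d, a < c /\ c <= d /\ d < b /\
    forall z, (z < c \/ d < z) -> eta z = 0.

Definition test_vec (N : nat) (a b : R) (eta : nat -> R -> R) : Prop :=
  forall i, (i < N)%nat -> test_fun a b (eta i).

Definition is_var_deriv (N : nat) (a b : R) (F : (nat -> R -> R) -> R)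
    (x g : nat -> R -> R) : Prop :=
  forall eta, test_vec N a b eta ->
    is_derive (fun eps => F (fun i z => x i z + eps * eta i z)) 0
      (RInt (fun z => sumR N (fun i => g i z * eta i z)) a b).

Definition ip (I : list (nat * nat)) (p : nat) : nat := fst (nth p I (0, 0)%nat).
Definition jp (I : list (nat * nat)) (p : nat) : nat := snd (nth p I (0, 0)%nat).

Definition Hfun (a b : R) (I : list (nat * nat)) (H : (nat -> R) -> R)
    (x : nat -> R -> R) : R :=
  RInt (fun z => H (fun p => Derive_n (x (ip I p)) (jp I p) z)) a b.

Definition Hbar (a b : R) (H : (nat -> R) -> R) (y : nat -> R -> R) : R :=
  RInt (fun z => H (fun p => y p z)) a b.

Definition xbar (I : list (nat * nat)) (x : nat -> R -> R -> R) (p : nat) (t z : R) : R :=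
  Derive_n (fun z' => x (ip I p) t z') (jp I p) z.

(* scalar operator J_{ik} = sum_{j=0}^m (P_j)_{ik} d_z^j, with P j i k = (P_j)_{ik} *)
Definition Jop (m : nat) (P : nat -> nat -> nat -> R) (i k : nat) (f : R -> R) : R -> R :=
  fun z => sumR (S m) (fun j => P j i k * Derive_n f j z).

Definition JJop (m : nat) (P : nat -> nat -> nat -> R) (I : list (nat * nat))
    (p q : nat) (f : R -> R) : R -> R :=
  Derive_n (Jop m P (ip I p) (ip I q) (fun w => (-1) ^ (jp I q) * Derive_n f (jp I q) w))
    (jp I p).

Definition JJvec (m : nat) (P : nat -> nat -> nat -> R) (I : list (nat * nat))
    (f : nat -> R -> R) (p : nat) (z : R) : R :=
  sumR (length I) (fun q => JJop m P I p q (f q) z).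

(* The extended state is [xbar = lift I x], where [(lift I y)_p = d_z^(j_p) y_(i_p)], and
   [Hfun = Hbar o lift I].  Perturbing [x] by a test function [eta] perturbs [xbar] by
   [lift I eta], so after integrating by parts [lift_adj I (delta Hbar (xbar))] is a
   variational derivative of [Hfun] at [x]; here
   [(lift_adj I G)_k = sum_(p : i_p = k) (-d_z)^(j_p) G_p] is the formal adjoint of [lift I].
   By the fundamental lemma of the calculus of variations it equals [delta Hfun (x)] on
   [[a, b]].  Since [d_t] commutes with [d_z] (Schwarz),
   [d_t xbar = lift I (J (lift_adj I (delta Hbar (xbar))))], and [lift I o J o lift_adj I]
   is the operator [JJ].  Skew-adjointness of [JJ] is checked term by term: integrating
   [e_p d_z^(j_p) (P_j)_(i_p i_q) d_z^j (-d_z)^(j_q) f_q] by parts [j_p + j + j_q] times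
   produces exactly the sign that [P_j = (-1)^(j+1) P_j^T] compensates. *)

From Stdlib Require Import Reals List Lia Lra FunctionalExtensionality.
From Coquelicot Require Import Coquelicot.
Open Scope R_scope.

Lemma sumR_ext N f g : (forall k, (k < N)%nat -> f k = g k) -> sumR N f = sumR N g.
Proof.
  induction N as [|N IH]; intros E; simpl; auto.
  rewrite IH, E; auto; intros; apply E; lia.
Qed.

Lemma sumR_zero N : sumR N (fun _ => 0) = 0.
Proof. induction N as [|N IH]; simpl; [|rewrite IH]; ring. Qed.

Lemma sumR_plus N f g : sumR N (fun k => f k + g k) = sumR N f + sumR N g.
Proof. induction N as [|N IH]; simpl; [|rewrite IH]; ring. Qed.

Lemma sumR_opp N f : sumR N (fun k => - f k) = - sumR N f.
Proof. induction N as [|N IH]; simpl; [|rewrite IH]; ring. Qed.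

Lemma sumR_mult_l N c f : c * sumR N f = sumR N (fun k => c * f k).
Proof. induction N as [|N IH]; simpl; [|rewrite <- IH]; ring. Qed.

Lemma sumR_mult_r N c f : sumR N f * c = sumR N (fun k => f k * c).
Proof. induction N as [|N IH]; simpl; [|rewrite <- IH]; ring. Qed.

Lemma sumR_swap N M (F : nat -> nat -> R) :
  sumR N (fun k => sumR M (F k)) = sumR M (fun q => sumR N (fun k => F k q)).
Proof.
  induction N as [|N IH]; simpl.
  - symmetry; apply sumR_zero.
  - rewrite IH, <- sumR_plus. reflexivity.
Qed.

Lemma sumR_kronecker N k0 (F : nat -> R) : (k0 < N)%nat ->
  sumR N (fun k => if Nat.eqb k0 k then F k else 0) = F k0.
Proof.
  induction N as [|N IH]; intros Hk; [lia|]. simpl.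
  destruct (Nat.eq_dec k0 N) as [->|Hne].
  - rewrite Nat.eqb_refl, (sumR_ext N _ (fun _ => 0)), sumR_zero; [ring|].
    intros k Hk'. destruct (Nat.eqb_spec N k); [lia|reflexivity].
  - rewrite IH by lia. destruct (Nat.eqb_spec k0 N); [lia|ring].
Qed.

Lemma continuous_sumR N (F : nat -> R -> R) z :
  (forall k, (k < N)%nat -> continuous (F k) z) ->
  continuous (fun y => sumR N (fun k => F k y)) z.
Proof.
  induction N as [|N IH]; intros HF; simpl; [apply continuous_const|].
  apply (continuous_plus (fun y => sumR N (fun k => F k y)) (F N)); auto.
Qed.

Lemma RInt_sumR N (F : nat -> R -> R) a b :
  (forall k, (k < N)%nat -> forall z, continuous (F k) z) ->
  RInt (fun z => sumR N (fun k => F k z)) a b = sumR N (fun k => RInt (F k) a b).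
Proof.
  assert (Hex : forall f : R -> R, (forall z, continuous f z) -> ex_RInt f a b)
    by (intros f Hf; apply (ex_RInt_continuous (V := R_CompleteNormedModule)); auto).
  induction N as [|N IH]; intros HF; simpl.
  - rewrite RInt_const. apply Rmult_0_r.
  - rewrite (RInt_plus (V := R_CompleteNormedModule)), IH; auto.
    apply Hex. intro z. apply continuous_sumR. auto.
Qed.

Definition derivable_upto (k : nat) (f : R -> R) : Prop :=
  forall j z, (j <= k)%nat -> ex_derive (Derive_n f j) z.

Lemma smooth1_derivable_upto f : smooth1 f <-> forall k, derivable_upto k f.
Proof.
  split.
  - intros Hf k j z _. apply Hf.
  - intros Hf k z. split; [|apply (ex_derive_continuous (V := R_NormedModule))];
    apply (Hf k); lia.
Qed.

Lemma smooth1_ex f : smooth1 f -> forall z, ex_derive f z.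
Proof. intros Hf z. apply (Hf 0%nat). Qed.

Lemma smooth1_cont f : smooth1 f -> forall z, continuous f z.
Proof. intros Hf z. apply (Hf 0%nat). Qed.

Lemma Derive_n_Derive f k : Derive_n (Derive f) k = Derive_n f (S k).
Proof.
  apply functional_extensionality; intro z.
  rewrite (Derive_n_comp f k 1), Nat.add_1_r. reflexivity.
Qed.

Lemma derivable_upto_S f k :
  derivable_upto (S k) f <-> (forall z, ex_derive f z) /\ derivable_upto k (Derive f).
Proof.
  split.
  - intros Hf. split.
    + intro z. apply (Hf 0%nat); lia.
    + intros j z Hj. rewrite Derive_n_Derive. apply Hf. lia.
  - intros [Hf HD] [|j] z Hj; [apply Hf|].
    rewrite <- Derive_n_Derive. apply HD. lia.
Qed.

Lemma derivable_upto_0 f : derivable_upto 0 f <-> forall z, ex_derive f z.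
Proof.
  split; [intros Hf z; apply (Hf 0%nat z); lia|].
  intros Hf j z Hj. replace j with 0%nat by lia. apply Hf.
Qed.

Lemma derivable_upto_const c k : derivable_upto k (fun _ => c).
Proof.
  revert c; induction k as [|k IH]; intro c.
  - apply derivable_upto_0. intro; apply ex_derive_const.
  - apply derivable_upto_S. split; [intro; apply ex_derive_const|].
    replace (Derive (fun _ => c)) with (fun _ : R => 0); [apply IH|].
    apply functional_extensionality; intro; symmetry; apply Derive_const.
Qed.

Lemma derivable_upto_id k : derivable_upto k (fun z => z).
Proof.
  destruct k as [|k].
  - apply derivable_upto_0. intro; apply ex_derive_id.
  - apply derivable_upto_S. split; [intro; apply ex_derive_id|].
    replace (Derive (fun z => z)) with (fun _ : R => 1); [apply derivable_upto_const|].
    apply functional_extensionality; intro; symmetry; apply Derive_id.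
Qed.

Lemma derivable_upto_plus k : forall f g, derivable_upto k f -> derivable_upto k g ->
  derivable_upto k (fun z => f z + g z).
Proof.
  induction k as [|k IH]; intros f g Hf Hg.
  - rewrite derivable_upto_0 in *. intro z. apply (ex_derive_plus f g); auto.
  - apply derivable_upto_S in Hf as [Hf Hf']. apply derivable_upto_S in Hg as [Hg Hg'].
    apply derivable_upto_S. split; [intro; apply (ex_derive_plus f g); auto|].
    replace (Derive (fun z => f z + g z)) with (fun z => Derive f z + Derive g z);
      [apply IH; auto|].
    apply functional_extensionality; intro z. rewrite Derive_plus; auto.
Qed.

Lemma derivable_upto_mult k : forall f g, derivable_upto k f -> derivable_upto k g ->
  derivable_upto k (fun z => f z * g z).
Proof.
  induction k as [|k IH]; intros f g Hf Hg.
  - rewrite derivable_upto_0 in *. intro z. apply (ex_derive_mult f g); auto.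
  - assert (Hfk : derivable_upto k f) by (intros j z Hj; apply Hf; lia).
    assert (Hgk : derivable_upto k g) by (intros j z Hj; apply Hg; lia).
    apply derivable_upto_S in Hf as [Hf Hf']. apply derivable_upto_S in Hg as [Hg Hg'].
    apply derivable_upto_S. split; [intro; apply (ex_derive_mult f g); auto|].
    replace (Derive (fun z => f z * g z)) with (fun z => Derive f z * g z + f z * Derive g z);
      [apply derivable_upto_plus; apply IH; auto|].
    apply functional_extensionality; intro z. rewrite Derive_mult; auto.
Qed.

Lemma derivable_upto_comp k : forall f g, smooth1 f -> derivable_upto k g ->
  derivable_upto k (fun z => f (g z)).
Proof.
  induction k as [|k IH]; intros f g Hf Hg.
  - rewrite derivable_upto_0 in *. intro z.
    apply (ex_derive_comp f g); auto. apply smooth1_ex; auto.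
  - assert (Hgk : derivable_upto k g) by (intros j z Hj; apply Hg; lia).
    apply derivable_upto_S in Hg as [Hg Hg'].
    apply derivable_upto_S.
    split; [intro; apply (ex_derive_comp f g); auto; apply smooth1_ex; auto|].
    replace (Derive (fun z => f (g z))) with (fun z => Derive g z * Derive f (g z));
      [apply derivable_upto_mult; auto; apply IH; auto|].
    + intros j z. rewrite Derive_n_Derive. apply Hf.
    + apply functional_extensionality; intro z.
      rewrite (Derive_comp f g); auto. apply smooth1_ex; auto.
Qed.

Lemma derivable_upto_sumR k N (F : nat -> R -> R) :
  (forall i, (i < N)%nat -> derivable_upto k (F i)) ->
  derivable_upto k (fun z => sumR N (fun i => F i z)).
Proof.
  induction N as [|N IH]; intros HF; simpl; [apply derivable_upto_const|].
  apply (derivable_upto_plus k (fun z => sumR N (fun i => F i z))); auto.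
Qed.

Lemma smooth1_const c : smooth1 (fun _ => c).
Proof. apply smooth1_derivable_upto. intro; apply derivable_upto_const. Qed.

Lemma smooth1_id : smooth1 (fun z => z).
Proof. apply smooth1_derivable_upto. intro; apply derivable_upto_id. Qed.

Lemma smooth1_plus f g : smooth1 f -> smooth1 g -> smooth1 (fun z => f z + g z).
Proof. rewrite !smooth1_derivable_upto. intros; apply derivable_upto_plus; auto. Qed.

Lemma smooth1_mult f g : smooth1 f -> smooth1 g -> smooth1 (fun z => f z * g z).
Proof. rewrite !smooth1_derivable_upto. intros; apply derivable_upto_mult; auto. Qed.

Lemma smooth1_scal c f : smooth1 f -> smooth1 (fun z => c * f z).
Proof. apply smooth1_mult, smooth1_const. Qed.

Lemma smooth1_comp f g : smooth1 f -> smooth1 g -> smooth1 (fun z => f (g z)).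
Proof.
  intros Hf Hg. apply smooth1_derivable_upto. intro.
  apply derivable_upto_comp; auto. apply smooth1_derivable_upto; auto.
Qed.

Lemma smooth1_sumR N (F : nat -> R -> R) :
  (forall k, (k < N)%nat -> smooth1 (F k)) -> smooth1 (fun z => sumR N (fun k => F k z)).
Proof.
  induction N as [|N IH]; intros HF; simpl; [apply smooth1_const|].
  apply (smooth1_plus (fun z => sumR N (fun k => F k z))); auto.
Qed.

Lemma smooth1_Derive_n f j : smooth1 f -> smooth1 (Derive_n f j).
Proof.
  intros Hf k z. replace (Derive_n (Derive_n f j) k) with (Derive_n f (k + j)); [apply Hf|].
  apply functional_extensionality; intro; symmetry; apply Derive_n_comp.
Qed.

Lemma smooth1_Derive f : smooth1 f -> smooth1 (Derive f).
Proof. apply (smooth1_Derive_n f 1). Qed.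

Lemma Derive_n_plus_smooth f g j : smooth1 f -> smooth1 g ->
  Derive_n (fun z => f z + g z) j = (fun z => Derive_n f j z + Derive_n g j z).
Proof.
  intros Hf Hg. apply functional_extensionality; intro z.
  apply Derive_n_plus; apply filter_forall; intros y [|k] _; [exact I|apply Hf|exact I|apply Hg].
Qed.

Lemma Derive_n_sumR N (F : nat -> R -> R) j :
  (forall k, (k < N)%nat -> smooth1 (F k)) ->
  Derive_n (fun z => sumR N (fun k => F k z)) j = (fun z => sumR N (fun k => Derive_n (F k) j z)).
Proof.
  induction N as [|N IH]; intros HF; simpl.
  - apply functional_extensionality; intro z. destruct j; [reflexivity|apply Derive_n_const].
  - rewrite (Derive_n_plus_smooth (fun z => sumR N (fun k => F k z))), IH; auto.
    apply smooth1_sumR; auto.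
Qed.

Lemma Derive_n_scal c f j : Derive_n (fun z => c * f z) j = (fun z => c * Derive_n f j z).
Proof. apply functional_extensionality; intro z. apply Derive_n_scal_l. Qed.

(** * Bump functions *)

Lemma exp_ge_pow x N : 0 <= x -> x ^ N / INR (Factorial.fact N) <= exp x.
Proof.
  intros Hx. eapply Rle_trans; [|apply (exp_ge_taylor x N Hx)].
  destruct N as [|N]; cbn [sum_f_R0]; [apply Rle_refl|].
  assert (0 <= sum_f_R0 (fun k => x ^ k / INR (Factorial.fact k)) N); [|lra].
  apply cond_pos_sum. intro k. apply Rdiv_le_0_compat; [apply pow_le; lra|apply INR_fact_lt_0].
Qed.

Inductive is_poly : (R -> R) -> Prop :=
| is_poly_const c : is_poly (fun _ => c)
| is_poly_id : is_poly (fun u => u)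
| is_poly_plus p q : is_poly p -> is_poly q -> is_poly (fun u => p u + q u)
| is_poly_mult p q : is_poly p -> is_poly q -> is_poly (fun u => p u * q u).

Lemma is_poly_derive p : is_poly p -> exists p', is_poly p' /\ forall u, is_derive p u (p' u).
Proof.
  induction 1 as [c| |p q _ [p' [Hp' Dp]] _ [q' [Hq' Dq]]|p q Hp [p' [Hp' Dp]] Hq [q' [Hq' Dq]]].
  - exists (fun _ => 0). split; [constructor|].
    intro; apply (is_derive_const (K := R_AbsRing) (V := R_NormedModule)).
  - exists (fun _ => 1). split; [constructor|]. intro; apply (is_derive_id (K := R_AbsRing)).
  - exists (fun u => p' u + q' u). split; [constructor; auto|].
    intro u. apply (is_derive_plus (K := R_AbsRing) (V := R_NormedModule)); auto.
  - exists (fun u => p' u * q u + p u * q' u). split; [repeat constructor; auto|].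
    intro u. apply (is_derive_mult (K := R_AbsRing)); auto. intros; apply Rmult_comm.
Qed.

Lemma is_poly_bound p : is_poly p ->
  exists C N, 0 <= C /\ forall u, 1 <= u -> Rabs (p u) <= C * u ^ N.
Proof.
  induction 1 as [c| |p q _ [C1 [N1 [HC1 B1]]] _ [C2 [N2 [HC2 B2]]]
                  |p q _ [C1 [N1 [HC1 B1]]] _ [C2 [N2 [HC2 B2]]]].
  - exists (Rabs c), 0%nat. split; [apply Rabs_pos|]. intros; simpl; lra.
  - exists 1, 1%nat. split; [lra|]. intros u Hu. rewrite Rabs_pos_eq; simpl; lra.
  - exists (C1 + C2), (N1 + N2)%nat. split; [lra|]. intros u Hu.
    assert (u ^ N1 <= u ^ (N1 + N2)) by (apply Rle_pow; lia || lra).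
    assert (u ^ N2 <= u ^ (N1 + N2)) by (apply Rle_pow; lia || lra).
    specialize (B1 u Hu). specialize (B2 u Hu).
    eapply Rle_trans; [apply Rabs_triang|]. nra.
  - exists (C1 * C2), (N1 + N2)%nat. split; [nra|]. intros u Hu.
    rewrite Rabs_mult, pow_add.
    replace (C1 * C2 * (u ^ N1 * u ^ N2)) with ((C1 * u ^ N1) * (C2 * u ^ N2)) by ring.
    apply Rmult_le_compat; auto; apply Rabs_pos.
Qed.

Lemma is_poly_exp_vanish p : is_poly p -> forall eps, 0 < eps ->
  exists M, 0 < M /\ forall u, M < u -> Rabs (p u * exp (- u)) < eps.
Proof.
  intros Hp eps Heps. destruct (is_poly_bound p Hp) as [C [N [HC B]]].
  set (K := INR (Factorial.fact (S N))).
  assert (HK : 0 < K) by apply INR_fact_lt_0.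
  exists (Rmax 1 (C * K / eps)). split; [eapply Rlt_le_trans; [|apply Rmax_l]; lra|].
  intros u Hu.
  assert (Hu1 : 1 < u) by (eapply Rle_lt_trans; [apply Rmax_l|exact Hu]).
  assert (HuM : C * K / eps < u) by (eapply Rle_lt_trans; [apply Rmax_r|exact Hu]).
  assert (Hexp : u ^ N * u <= K * exp u).
  { pose proof (exp_ge_pow u (S N) ltac:(lra)) as E. fold K in E.
    assert (E' : u ^ S N / K * K <= exp u * K) by (apply Rmult_le_compat_r; lra).
    replace (u ^ S N / K * K) with (u ^ N * u) in E' by (rewrite <- tech_pow_Rmult; field; lra).
    lra. }
  assert (He : 0 < exp (- u)) by apply exp_pos.
  assert (Heu : exp (- u) * exp u = 1) by (rewrite <- exp_plus, Rplus_opp_l; apply exp_0).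
  assert (Hbound : C * u ^ N * exp (- u) * u <= C * K).
  { replace (C * u ^ N * exp (- u) * u) with ((C * exp (- u)) * (u ^ N * u)) by ring.
    replace (C * K) with ((C * exp (- u)) * (K * exp u))
      by (transitivity (C * K * (exp (- u) * exp u)); [ring|rewrite Heu; ring]).
    apply Rmult_le_compat_l; [apply Rmult_le_pos; lra|exact Hexp]. }
  assert (HCK : C * K < eps * u).
  { apply (Rmult_lt_compat_r eps) in HuM; [|lra].
    replace (C * K / eps * eps) with (C * K) in HuM by (field; lra). lra. }
  rewrite Rabs_mult, (Rabs_pos_eq (exp _)) by lra.
  apply Rle_lt_trans with (C * u ^ N * exp (- u)).
  - apply Rmult_le_compat_r; [lra|]. apply B. lra.
  - apply Rmult_lt_reg_r with u; lra.
Qed.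

(* [r (1/x) exp (-1/x)] for polynomial [r] is a family closed under differentiation,
   all of whose members are flat at [0]. *)
Definition flat (r : R -> R) (x : R) : R :=
  if Rlt_dec 0 x then r (/ x) * exp (- / x) else 0.

Lemma flat_derive r : is_poly r ->
  exists r', is_poly r' /\ forall x, is_derive (flat r) x (flat r' x).
Proof.
  intros Hr. destruct (is_poly_derive r Hr) as [dr [Hdr Dr]].
  exists (fun u => u * u * (r u + (-1) * dr u)). split; [repeat constructor; auto|].
  intro x. destruct (Rtotal_order x 0) as [Hx|[->|Hx]].
  - apply (is_derive_ext_loc (K := R_AbsRing) (V := R_NormedModule) (fun _ => 0)).
    + apply (locally_interval _ x m_infty 0); simpl; auto. intros y _ Hy.
      unfold flat. destruct (Rlt_dec 0 y); [lra|reflexivity].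
    + unfold flat. destruct (Rlt_dec 0 x); [lra|].
      apply (is_derive_const (K := R_AbsRing) (V := R_NormedModule)).
  - unfold flat at 2. destruct (Rlt_dec 0 0); [lra|].
    apply is_derive_Reals. intros eps Heps.
    destruct (is_poly_exp_vanish (fun u => u * r u) ltac:(repeat constructor; auto) eps Heps)
      as [M [HM Hvan]].
    exists (mkposreal (/ M) (Rinv_0_lt_compat M HM)). intros h Hh0 Hh. simpl in Hh.
    unfold flat. rewrite Rplus_0_l. destruct (Rlt_dec 0 0); [lra|].
    destruct (Rlt_dec 0 h) as [Hpos|Hneg].
    + replace ((r (/ h) * exp (- / h) - 0) / h - 0) with (/ h * r (/ h) * exp (- / h))
        by (field; lra).
      apply Hvan. rewrite Rabs_pos_eq in Hh by lra.
      rewrite <- (Rinv_inv M). apply Rinv_lt_contravar; [|lra].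
      apply Rmult_lt_0_compat; [lra|apply Rinv_0_lt_compat; lra].
    + replace ((0 - 0) / h - 0) with 0 by (field; auto). rewrite Rabs_R0. auto.
  - apply (is_derive_ext_loc (K := R_AbsRing) (V := R_NormedModule)
             (fun x => r (/ x) * exp (- / x))).
    + apply (locally_interval _ x 0 p_infty); simpl; auto. intros y Hy _.
      unfold flat. destruct (Rlt_dec 0 y); [reflexivity|lra].
    + unfold flat. destruct (Rlt_dec 0 x); [|lra].
      assert (Hdr' : Derive (fun y => r y) (/ x) = dr (/ x)) by (apply is_derive_unique, Dr).
      auto_derive.
      * repeat split; try lra. exists (dr (/ x)). apply Dr.
      * rewrite Hdr'. field. lra.
Qed.

Lemma flat_smooth r : is_poly r -> smooth1 (flat r).
Proof.
  intros Hr. apply smooth1_derivable_upto. intro k. revert r Hr.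
  induction k as [|k IH]; intros r Hr; destruct (flat_derive r Hr) as [r' [Hr' Dr]].
  - apply derivable_upto_0. intro x. exists (flat r' x). apply Dr.
  - apply derivable_upto_S. split; [intro x; exists (flat r' x); apply Dr|].
    replace (Derive (flat r)) with (flat r'); [apply IH; auto|].
    apply functional_extensionality; intro x. symmetry. apply is_derive_unique, Dr.
Qed.

Definition bump (c d z : R) : R := flat (fun _ => 1) (z - c) * flat (fun _ => 1) (d - z).

Lemma bump_smooth c d : smooth1 (bump c d).
Proof.
  assert (Hflat : smooth1 (flat (fun _ => 1))) by (apply flat_smooth; constructor).
  assert (Haff : forall s e, smooth1 (fun z => s * z + e)).
  { intros s e. apply (smooth1_plus (fun z => s * z)); [|apply smooth1_const].
    apply smooth1_scal, smooth1_id. }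
  replace (bump c d) with
    (fun z => flat (fun _ => 1) (1 * z + - c) * flat (fun _ => 1) (-1 * z + d)).
  - apply smooth1_mult; apply smooth1_comp; auto.
  - apply functional_extensionality; intro z. unfold bump. f_equal; f_equal; ring.
Qed.

Lemma bump_pos c d z : c < z < d -> 0 < bump c d z.
Proof.
  intros Hz. unfold bump, flat.
  destruct (Rlt_dec 0 (z - c)); [|lra]. destruct (Rlt_dec 0 (d - z)); [|lra].
  apply Rmult_lt_0_compat; rewrite Rmult_1_l; apply exp_pos.
Qed.

Lemma bump_nonneg c d z : 0 <= bump c d z.
Proof.
  unfold bump, flat.
  destruct (Rlt_dec 0 (z - c)), (Rlt_dec 0 (d - z)); try lra.
  apply Rmult_le_pos; rewrite Rmult_1_l; left; apply exp_pos.
Qed.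

Lemma bump_out c d z : z <= c \/ d <= z -> bump c d z = 0.
Proof.
  intros Hz. unfold bump, flat.
  destruct (Rlt_dec 0 (z - c)), (Rlt_dec 0 (d - z)); try ring. lra.
Qed.

(** * The fundamental lemma of the calculus of variations *)

Lemma continuous_eps (f : R -> R) z : continuous f z ->
  forall eps, 0 < eps -> exists delta, 0 < delta /\
    forall y, Rabs (y - z) < delta -> Rabs (f y - f z) < eps.
Proof.
  intros Hf eps Heps. apply continuity_pt_filterlim in Hf.
  destruct (Hf eps Heps) as [delta [Hdelta Hy]]. exists delta. split; auto.
  intros y Hyz. destruct (Req_dec y z) as [->|Hne].
  - rewrite Rminus_eq_0, Rabs_R0. auto.
  - apply Hy. repeat split; auto.
Qed.

Lemma exists_near_in_open a b z delta : a < b -> a <= z <= b -> 0 < delta ->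
  exists y, a < y < b /\ Rabs (y - z) < delta.
Proof.
  intros Hab Hz Hd. set (e := Rmin delta (b - a) / 4).
  assert (0 < e < delta /\ e <= (b - a) / 4) as [He1 He2].
  { unfold e. pose proof (Rmin_l delta (b - a)). pose proof (Rmin_r delta (b - a)).
    assert (0 < Rmin delta (b - a)) by (apply Rmin_glb_lt; lra). lra. }
  destruct (Rle_dec z ((a + b) / 2)).
  - exists (z + e). split; [lra|]. rewrite Rabs_pos_eq; lra.
  - exists (z - e). split; [lra|]. rewrite Rabs_left; lra.
Qed.

Lemma continuous_eq_closed (F G : R -> R) a b : a < b ->
  (forall z : R, continuous F z) -> (forall z : R, continuous G z) ->
  (forall z, a < z < b -> F z = G z) -> forall z, a <= z <= b -> F z = G z.
Proof.
  intros Hab HF HG Heq z Hz.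
  destruct (Req_dec (F z - G z) 0) as [|Hne]; [lra|exfalso].
  assert (Hc : continuous (fun y => F y - G y) z) by (apply (continuous_minus F G); auto).
  destruct (continuous_eps _ z Hc (Rabs (F z - G z))) as [delta [Hdelta Hnear]];
    [apply Rabs_pos_lt; auto|].
  destruct (exists_near_in_open a b z delta Hab Hz Hdelta) as [y [Hy Hyz]].
  specialize (Hnear y Hyz). rewrite Heq in Hnear by auto.
  replace (G y - G y - (F z - G z)) with (- (F z - G z)) in Hnear by ring.
  rewrite Rabs_Ropp in Hnear. lra.
Qed.

Lemma Derive_n_eq_on F G a b : a < b -> smooth1 F -> smooth1 G ->
  (forall y, a <= y <= b -> F y = G y) ->
  forall k z, a <= z <= b -> Derive_n F k z = Derive_n G k z.
Proof.
  intros Hab HF HG Heq k. apply continuous_eq_closed; auto.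
  - apply smooth1_cont, smooth1_Derive_n; auto.
  - apply smooth1_cont, smooth1_Derive_n; auto.
  - intros z Hz. apply Derive_n_ext_loc.
    apply (locally_interval _ z a b); simpl; try lra. intros y Hy1 Hy2. apply Heq. lra.
Qed.

Lemma bump_test a b c d : a < c -> c <= d -> d < b -> test_fun a b (bump c d).
Proof.
  intros. split; [apply bump_smooth|]. exists c, d. repeat split; auto.
  intros z Hz. apply bump_out. lra.
Qed.

Lemma RInt_gt_0_sub (f : R -> R) a b c d : a <= c -> c < d -> d <= b ->
  (forall z, continuous f z) -> (forall z, a < z < b -> 0 <= f z) ->
  (forall z, c < z < d -> 0 < f z) -> 0 < RInt f a b.
Proof.
  intros Hac Hcd Hdb Hc Hnn Hpos.
  assert (Hex : forall u v, ex_RInt f u v)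
    by (intros; apply (ex_RInt_continuous (V := R_CompleteNormedModule)); auto).
  rewrite <- (RInt_Chasles f a c b), <- (RInt_Chasles f c d b) by auto.
  assert (0 <= RInt f a c) by (apply RInt_ge_0; auto; intros; apply Hnn; lra).
  assert (0 <= RInt f d b) by (apply RInt_ge_0; auto; intros; apply Hnn; lra).
  assert (0 < RInt f c d) by (apply RInt_gt_0; auto).
  unfold plus; simpl. lra.
Qed.

Lemma interval_around a b z delta : a < z < b -> 0 < delta ->
  exists c d, a < c < z /\ z < d < b /\ forall y, c < y < d -> Rabs (y - z) < delta.
Proof.
  intros Hz Hdelta.
  exists (Rmax (z - delta / 2) ((a + z) / 2)), (Rmin (z + delta / 2) ((z + b) / 2)).
  pose proof (Rmax_l (z - delta / 2) ((a + z) / 2)).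
  pose proof (Rmax_r (z - delta / 2) ((a + z) / 2)).
  pose proof (Rmin_l (z + delta / 2) ((z + b) / 2)).
  pose proof (Rmin_r (z + delta / 2) ((z + b) / 2)).
  assert (Rmax (z - delta / 2) ((a + z) / 2) < z) by (apply Rmax_lub_lt; lra).
  assert (z < Rmin (z + delta / 2) ((z + b) / 2)) by (apply Rmin_glb_lt; lra).
  split; [lra|split; [lra|]]. intros y Hy. apply Rabs_def1; lra.
Qed.

Lemma fundamental_lemma_open (h : R -> R) a b : (forall z, continuous h z) ->
  (forall eta, test_fun a b eta -> RInt (fun z => h z * eta z) a b = 0) ->
  forall z, a < z < b -> h z = 0.
Proof.
  intros Hc Hint z0 Hz0. set (s := h z0).
  destruct (Req_dec s 0) as [|Hs]; auto. exfalso.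
  destruct (continuous_eps h z0 (Hc z0) (Rabs s)) as [delta [Hdelta Hnear]];
    [apply Rabs_pos_lt; auto|].
  destruct (interval_around a b z0 delta Hz0 Hdelta) as [c [d [Hc1 [Hd1 Hcd]]]].
  assert (Hsign : forall y, c < y < d -> 0 < s * h y).
  { intros y Hy. specialize (Hnear y (Hcd y Hy)). fold s in Hnear. apply Rabs_def2 in Hnear.
    destruct (Rle_lt_dec 0 s).
    - rewrite Rabs_pos_eq in Hnear by lra. nra.
    - rewrite Rabs_left in Hnear by lra. nra. }
  assert (Hbc : forall z, continuous (bump c d) z) by apply smooth1_cont, bump_smooth.
  assert (Hpos : 0 < RInt (fun z => s * (h z * bump c d z)) a b).
  { apply (RInt_gt_0_sub _ a b c d); try lra.
    - intro z. apply (continuous_mult (fun _ => s)); [apply continuous_const|].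
      apply (continuous_mult h); auto.
    - intros z Hz. rewrite <- Rmult_assoc.
      destruct (Rlt_dec c z), (Rlt_dec z d); [|rewrite bump_out by lra; lra..].
      apply Rmult_le_pos; [left; apply Hsign; lra|apply bump_nonneg].
    - intros z Hz. rewrite <- Rmult_assoc.
      apply Rmult_lt_0_compat; [apply Hsign|apply bump_pos]; auto. }
  rewrite (RInt_scal (V := R_CompleteNormedModule) (fun z => h z * bump c d z)) in Hpos.
  - rewrite (Hint _ (bump_test a b c d ltac:(lra) ltac:(lra) ltac:(lra))) in Hpos.
    unfold scal in Hpos; simpl in Hpos. unfold mult in Hpos; simpl in Hpos. lra.
  - apply (ex_RInt_continuous (V := R_CompleteNormedModule)). intros z _.
    apply (continuous_mult h); auto.
Qed.

Lemma fundamental_lemma (h : R -> R) a b : a < b -> (forall z, continuous h z) ->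
  (forall eta, test_fun a b eta -> RInt (fun z => h z * eta z) a b = 0) ->
  forall z, a <= z <= b -> h z = 0.
Proof.
  intros Hab Hc Hint. apply (continuous_eq_closed h (fun _ => 0)); auto.
  - intro; apply continuous_const.
  - apply fundamental_lemma_open; auto.
Qed.

(** * Integration by parts *)

Lemma RInt_parts f g a b : smooth1 f -> smooth1 g ->
  RInt (fun z => f z * Derive g z) a b =
  f b * g b - f a * g a - RInt (fun z => Derive f z * g z) a b.
Proof.
  intros Hf Hg.
  assert (Hfg : smooth1 (fun z => f z * g z)) by (apply smooth1_mult; auto).
  assert (Hex : forall u : R -> R, smooth1 u -> ex_RInt u a b)
    by (intros u Hu; apply (ex_RInt_continuous (V := R_CompleteNormedModule));
        intros; apply smooth1_cont; auto).
  assert (HD : Derive (fun z => f z * g z) = fun z => Derive f z * g z + f z * Derive g z).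
  { apply functional_extensionality; intro z. apply Derive_mult; apply smooth1_ex; auto. }
  assert (HFTC : RInt (Derive (fun z => f z * g z)) a b = f b * g b - f a * g a).
  { apply (RInt_Derive (fun z => f z * g z)); intros;
      [apply smooth1_ex|apply smooth1_cont, smooth1_Derive]; auto. }
  rewrite HD, (RInt_plus (V := R_CompleteNormedModule)) in HFTC.
  - unfold plus in HFTC; simpl in HFTC. lra.
  - apply Hex, smooth1_mult; auto using smooth1_Derive.
  - apply Hex, smooth1_mult; auto using smooth1_Derive.
Qed.

Lemma test_fun_Derive_n a b eta j : test_fun a b eta -> test_fun a b (Derive_n eta j).
Proof.
  intros [Hs [c [d [Hac [Hcd [Hdb Hout]]]]]].
  split; [apply smooth1_Derive_n, Hs|]. exists c, d. repeat split; auto.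
  intros z Hz. rewrite (Derive_n_ext_loc eta (fun _ => 0)).
  - destruct j; [reflexivity|apply Derive_n_const].
  - destruct Hz as [Hz|Hz].
    + apply (locally_interval _ z m_infty c); [exact I|exact Hz|].
      intros y _ Hy. apply Hout. simpl in Hy. lra.
    + apply (locally_interval _ z d p_infty); [exact Hz|exact I|].
      intros y Hy _. apply Hout. simpl in Hy. lra.
Qed.

Lemma test_fun_ends a b eta : test_fun a b eta -> eta a = 0 /\ eta b = 0.
Proof. intros [_ [c [d [Hac [Hcd [Hdb Hout]]]]]]. split; apply Hout; lra. Qed.

Lemma RInt_parts_test a b eta f j : test_fun a b eta -> smooth1 f ->
  RInt (fun z => f z * Derive_n eta j z) a b =
  (-1) ^ j * RInt (fun z => Derive_n f j z * eta z) a b.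
Proof.
  intros Heta. revert f. induction j as [|j IH]; intros f Hf; [symmetry; apply Rmult_1_l|].
  change (Derive_n eta (S j)) with (Derive (Derive_n eta j)).
  destruct (test_fun_ends a b _ (test_fun_Derive_n a b eta j Heta)) as [Ha Hb].
  assert (Hs : smooth1 eta) by apply Heta.
  rewrite RInt_parts, Ha, Hb, IH by auto using smooth1_Derive, smooth1_Derive_n.
  rewrite Derive_n_Derive. simpl. ring.
Qed.

(** * Chain rule in finitely many variables *)

Lemma upd_same v p y : upd v p y p = y.
Proof. unfold upd. rewrite Nat.eqb_refl. reflexivity. Qed.

Lemma upd_other v p y q : q <> p -> upd v p y q = v q.
Proof. intros Hq. unfold upd. destruct (Nat.eqb_spec q p); [lia|reflexivity]. Qed.

Lemma upd_upd v p y y' : upd (upd v p y) p y' = upd v p y'.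
Proof.
  apply functional_extensionality; intro q. unfold upd. destruct (Nat.eqb q p); reflexivity.
Qed.

Lemma upd_self v p : upd v p (v p) = v.
Proof.
  apply functional_extensionality; intro q. unfold upd. destruct (Nat.eqb_spec q p); congruence.
Qed.

Definition partialN (G : (nat -> R) -> R) (p : nat) : (nat -> R) -> R := pdN (p :: nil) G.

Definition C1N (l : nat) (G : (nat -> R) -> R) : Prop :=
  depends_on_first l G /\
  (forall v p, (p < l)%nat -> ex_derive (fun y => G (upd v p y)) (v p)) /\
  (forall p v, (p < l)%nat -> contN l (partialN G p) v).

Lemma Derive_upd G v p y : Derive (fun y' => G (upd v p y')) y = partialN G p (upd v p y).
Proof.
  unfold partialN, pdN. rewrite upd_same.
  apply Derive_ext. intro y'. rewrite upd_upd. reflexivity.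
Qed.

Lemma C1N_ex_derive l G v p y : C1N l G -> (p < l)%nat -> ex_derive (fun y' => G (upd v p y')) y.
Proof.
  intros [_ [HG _]] Hp. specialize (HG (upd v p y) p Hp). rewrite upd_same in HG.
  eapply (ex_derive_ext (K := R_AbsRing) (V := R_NormedModule)); [|exact HG].
  intro y'. simpl. rewrite upd_upd. reflexivity.
Qed.

Lemma finite_delta l (P : nat -> R -> Prop) :
  (forall q d d', 0 < d' <= d -> P q d -> P q d') ->
  (forall q, (q < l)%nat -> exists d, 0 < d /\ P q d) ->
  exists d, 0 < d /\ forall q, (q < l)%nat -> P q d.
Proof.
  intros Hmono. induction l as [|l IH]; intros H.
  - exists 1. split; [lra|]. intros; lia.
  - destruct IH as [d1 [Hd1 H1]]; [intros; apply H; lia|].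
    destruct (H l (Nat.lt_succ_diag_r l)) as [d2 [Hd2 H2]].
    assert (Hmin : 0 < Rmin d1 d2) by (apply Rmin_glb_lt; auto).
    exists (Rmin d1 d2). split; auto.
    intros q Hq. destruct (Nat.eq_dec q l) as [->|Hne].
    + apply (Hmono l d2); auto. split; auto. apply Rmin_r.
    + apply (Hmono q d1); [split; auto; apply Rmin_l|]. apply H1. lia.
Qed.

Lemma mult_close L D eps : 0 < eps -> exists e, 0 < e /\
  forall x q, Rabs (x - L) < e -> Rabs (q - D) < e -> Rabs (x * q - L * D) < eps.
Proof.
  intros Heps. set (K := Rabs L + Rabs D + 1).
  assert (HK : 0 < K) by (unfold K; pose proof (Rabs_pos L); pose proof (Rabs_pos D); lra).
  exists (Rmin 1 (eps / K)). split; [apply Rmin_glb_lt; [lra|apply Rdiv_lt_0_compat; auto]|].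
  intros x q Hx Hq. set (e := Rmin 1 (eps / K)) in *.
  assert (He1 : e <= 1) by apply Rmin_l.
  assert (HeK : e * K <= eps).
  { apply Rle_trans with (eps / K * K); [apply Rmult_le_compat_r; [lra|apply Rmin_r]|].
    right. field. lra. }
  replace (x * q - L * D) with ((x - L) * (q - D) + (x - L) * D + L * (q - D)) by ring.
  eapply Rle_lt_trans; [apply Rabs_triang|].
  eapply Rle_lt_trans; [apply Rplus_le_compat_r, Rabs_triang|].
  rewrite !Rabs_mult.
  pose proof (Rabs_pos (x - L)). pose proof (Rabs_pos (q - D)).
  assert (He : 0 < e) by (unfold e; apply Rmin_glb_lt; [lra|apply Rdiv_lt_0_compat; auto]).
  assert (Rabs (x - L) * Rabs (q - D) <= Rabs (x - L) * e) by (apply Rmult_le_compat_l; lra).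
  assert (Rabs (x - L) * e < e * e) by (apply Rmult_lt_compat_r; lra).
  assert (e * e <= e * 1) by (apply Rmult_le_compat_l; lra).
  assert (Rabs (x - L) * Rabs D <= e * Rabs D) by (apply Rmult_le_compat_r; [apply Rabs_pos|lra]).
  assert (Rabs L * Rabs (q - D) <= Rabs L * e) by (apply Rmult_le_compat_l; [apply Rabs_pos|lra]).
  unfold K in HeK. lra.
Qed.

Lemma Rabs_between x y c : Rmin x y <= c <= Rmax x y -> Rabs (c - x) <= Rabs (y - x).
Proof.
  unfold Rmin, Rmax. destruct (Rle_dec x y); intros [H1 H2].
  - rewrite !Rabs_pos_eq; lra.
  - rewrite !Rabs_left1; lra.
Qed.

Lemma upd_near l k (A : R -> nat -> R) (B : R -> R) z delta :
  (forall q, (q < l)%nat -> continuous (fun t => A t q) z) -> continuous B z -> 0 < delta ->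
  exists eta, 0 < eta /\ forall t c, Rabs (t - z) < eta ->
    Rmin (B z) (B t) <= c <= Rmax (B z) (B t) ->
    forall q, (q < l)%nat -> Rabs (upd (A t) k c q - upd (A z) k (B z) q) < delta.
Proof.
  intros HA HB Hdelta.
  destruct (continuous_eps B z HB delta Hdelta) as [e1 [He1 HB1]].
  destruct (finite_delta l (fun q e => forall t, Rabs (t - z) < e -> Rabs (A t q - A z q) < delta))
    as [e2 [He2 HA2]].
  - intros q e e' He' Hq t Ht. apply Hq. lra.
  - intros q Hq. apply (continuous_eps (fun t => A t q)); auto.
  - exists (Rmin e1 e2). split; [apply Rmin_glb_lt; auto|].
    intros t c Ht Hc q Hq.
    assert (Rabs (t - z) < e1) by (eapply Rlt_le_trans; [exact Ht|apply Rmin_l]).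
    assert (Rabs (t - z) < e2) by (eapply Rlt_le_trans; [exact Ht|apply Rmin_r]).
    destruct (Nat.eq_dec q k) as [->|Hne].
    + rewrite !upd_same. eapply Rle_lt_trans; [apply Rabs_between, Hc|]. auto.
    + rewrite !upd_other by auto. auto.
Qed.

Lemma chain_rule_step l G k (A : R -> nat -> R) (B : R -> R) z dB :
  C1N l G -> (k < l)%nat ->
  (forall q, (q < l)%nat -> continuous (fun t => A t q) z) -> is_derive B z dB ->
  is_derive (fun t => G (upd (A t) k (B t)) - G (upd (A t) k (B z))) z
    (partialN G k (upd (A z) k (B z)) * dB).
Proof.
  intros HG Hk HA HB. set (L := partialN G k (upd (A z) k (B z))).
  apply is_derive_Reals. intros eps Heps.
  destruct (mult_close L dB eps Heps) as [e [He Hclose]].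
  assert (HBq := HB). apply is_derive_Reals in HBq. destruct (HBq e He) as [d1 HB1].
  destruct (proj2 (proj2 HG) k (upd (A z) k (B z)) Hk e He) as [d2 [Hd2 HL]].
  destruct (upd_near l k A B z d2) as [d3 [Hd3 Hnear]]; auto.
  { apply (ex_derive_continuous (V := R_NormedModule)). exists dB. auto. }
  assert (Hd : 0 < Rmin d1 d3) by (apply Rmin_glb_lt; [apply cond_pos|auto]).
  exists (mkposreal _ Hd). intros h Hh0 Hh. simpl in Hh.
  (* Mean value theorem in the [k]-th variable, the others frozen at [A (z + h)]. *)
  destruct (MVT_gen (fun y => G (upd (A (z + h)) k y)) (B z) (B (z + h))
              (fun y => Derive (fun y => G (upd (A (z + h)) k y)) y)) as [c [Hc Hmvt]].
  { intros y _. apply Derive_correct, (C1N_ex_derive l); auto. }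
  { intros y _. apply continuity_pt_filterlim, (ex_derive_continuous (V := R_NormedModule)).
    apply (C1N_ex_derive l); auto. }
  simpl in Hmvt. rewrite Derive_upd in Hmvt.
  replace ((G (upd (A (z + h)) k (B (z + h))) - G (upd (A (z + h)) k (B z)) -
            (G (upd (A z) k (B z)) - G (upd (A z) k (B z)))) / h - L * dB)
    with (partialN G k (upd (A (z + h)) k c) * ((B (z + h) - B z) / h) - L * dB)
    by (rewrite Hmvt; field; auto).
  apply Hclose.
  - apply HL. intros q Hq. apply Hnear; auto.
    replace (z + h - z) with h by ring. eapply Rlt_le_trans; [exact Hh|apply Rmin_r].
  - apply HB1; auto. eapply Rlt_le_trans; [exact Hh|apply Rmin_l].
Qed.

Lemma chain_rule l G (V : R -> nat -> R) (V' : nat -> R) z : C1N l G ->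
  (forall q, (q < l)%nat -> is_derive (fun t => V t q) z (V' q)) ->
  is_derive (fun t => G (V t)) z (sumR l (fun p => partialN G p (V z) * V' p)).
Proof.
  intros HG HV.
  (* Telescoping: [W k t] moves only the first [k] coordinates. *)
  set (W := fun k t q => if (q <? k)%nat then V t q else V z q).
  assert (HWz : forall k, W k z = V z).
  { intro k. apply functional_extensionality; intro q. unfold W. destruct (q <? k)%nat; auto. }
  assert (HWk : forall k t, upd (W k t) k (V z k) = W k t).
  { intros k t. apply functional_extensionality; intro q. unfold upd, W.
    destruct (Nat.eqb_spec q k) as [->|]; [rewrite Nat.ltb_irrefl|]; auto. }
  assert (HWS : forall k t, upd (W k t) k (V t k) = W (S k) t).
  { intros k t. apply functional_extensionality; intro q. unfold upd, W.
    destruct (Nat.eqb_spec q k) as [->|Hne].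
    - replace (k <? S k)%nat with true; auto. symmetry. apply Nat.ltb_lt. lia.
    - destruct (Nat.ltb_spec q k), (Nat.ltb_spec q (S k)); auto; lia. }
  assert (HW : forall k, (k <= l)%nat ->
    is_derive (fun t => G (W k t)) z (sumR k (fun p => partialN G p (V z) * V' p))).
  { induction k as [|k IH]; intros Hk.
    - apply (is_derive_ext (fun _ => G (V z))); [reflexivity|].
      apply (is_derive_const (K := R_AbsRing) (V := R_NormedModule)).
    - apply (is_derive_ext
        (fun t => (G (upd (W k t) k (V t k)) - G (upd (W k t) k (V z k))) + G (W k t))).
      { intro t. rewrite HWk, HWS. simpl. ring. }
      simpl. rewrite Rplus_comm. rewrite <- (upd_self (V z) k) at 1. rewrite <- (HWz k) at 1.
      apply (is_derive_plus (K := R_AbsRing) (V := R_NormedModule)); [|apply IH; lia].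
      apply (chain_rule_step l G k (W k) (fun t => V t k)); auto; try lia.
      intros q Hq. unfold W. destruct (q <? k)%nat; [|apply continuous_const].
      apply (ex_derive_continuous (V := R_NormedModule)). exists (V' q). auto. }
  apply (is_derive_ext (fun t => G (W l t))); [|apply HW; lia].
  intro t. apply (proj1 HG). intros p Hp. unfold W. replace (p <? l)%nat with true; auto.
  symmetry. apply Nat.ltb_lt. auto.
Qed.

Lemma pdN_depends_on_first l F s : depends_on_first l F ->
  List.Forall (fun p => (p < l)%nat) s -> depends_on_first l (pdN s F).
Proof.
  intros HF. induction s as [|p s IH]; intros Hs; simpl; auto.
  inversion Hs as [|? ? Hp Hs']; subst.
  intros v w Hvw. rewrite (Hvw p Hp). apply Derive_ext. intro y.
  apply IH; auto. intros q Hq. unfold upd. destruct (Nat.eqb q p); auto.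
Qed.

Lemma smoothN_C1N l H s : depends_on_first l H -> smoothN l H ->
  List.Forall (fun p => (p < l)%nat) s -> C1N l (pdN s H).
Proof.
  intros Hd Hs Hl. split; [|split].
  - apply pdN_depends_on_first; auto.
  - intros v p Hp. apply (Hs s v Hl); auto.
  - intros p v Hp. apply (Hs (p :: s) v). constructor; auto.
Qed.

Lemma smooth1_pdN_comp l H (Y : nat -> R -> R) : depends_on_first l H -> smoothN l H ->
  (forall q, (q < l)%nat -> smooth1 (Y q)) ->
  forall s, List.Forall (fun p => (p < l)%nat) s -> smooth1 (fun z => pdN s H (fun q => Y q z)).
Proof.
  intros Hd Hs HY.
  assert (HD : forall s z, List.Forall (fun p => (p < l)%nat) s ->
    is_derive (fun z => pdN s H (fun q => Y q z)) z
      (sumR l (fun p => pdN (p :: s) H (fun q => Y q z) * Derive (Y p) z))).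
  { intros s z Hl. apply (chain_rule l (pdN s H) (fun z q => Y q z)).
    - apply smoothN_C1N; auto.
    - intros q Hq. apply Derive_correct, smooth1_ex. auto. }
  intros s Hl. apply smooth1_derivable_upto. intro k. revert s Hl.
  induction k as [|k IH]; intros s Hl.
  - apply derivable_upto_0. intro z. eexists. apply HD; auto.
  - apply derivable_upto_S. split; [intro z; eexists; apply HD; auto|].
    replace (Derive (fun z => pdN s H (fun q => Y q z)))
      with (fun z => sumR l (fun p => pdN (p :: s) H (fun q => Y q z) * Derive (Y p) z)).
    + apply derivable_upto_sumR. intros p Hp.
      apply derivable_upto_mult; [apply IH; constructor; auto|].
      apply smooth1_derivable_upto, smooth1_Derive. auto.
    + apply functional_extensionality; intro z. symmetry. apply is_derive_unique, HD. auto.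
Qed.

Lemma continuity_2d_pt_contN l F (V : R -> R -> nat -> R) x y : contN l F (V x y) ->
  (forall q, (q < l)%nat -> continuity_2d_pt (fun u v => V u v q) x y) ->
  continuity_2d_pt (fun u v => F (V u v)) x y.
Proof.
  intros HF HV eps. destruct (HF eps (cond_pos eps)) as [d [Hd HFd]].
  destruct (finite_delta l (fun q e => forall u v, Rabs (u - x) < e -> Rabs (v - y) < e ->
     Rabs (V u v q - V x y q) < d)) as [e [He HVe]].
  - intros q e e' He' Hq u v Hu Hv. apply Hq; lra.
  - intros q Hq. destruct (HV q Hq (mkposreal d Hd)) as [e He].
    exists e. split; [apply cond_pos|]. apply He.
  - exists (mkposreal e He). intros u v Hu Hv. apply HFd. intros q Hq. apply HVe; auto.
Qed.

Lemma continuity_2d_pt_snd (g : R -> R) x y : continuous g y ->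
  continuity_2d_pt (fun _ v => g v) x y.
Proof.
  intros Hg eps. destruct (continuous_eps g y Hg eps (cond_pos eps)) as [d [Hd Hgd]].
  exists (mkposreal d Hd). intros u v _ Hv. apply Hgd. auto.
Qed.

Lemma continuity_2d_pt_slice (f : R -> R -> R) x y : continuity_2d_pt f x y ->
  continuous (f x) y.
Proof.
  intros Hf. apply continuity_pt_filterlim. intros eps Heps.
  destruct (Hf (mkposreal eps Heps)) as [d Hd].
  exists d. split; [apply cond_pos|]. intros v [_ Hv].
  apply (Hd x v); auto. rewrite Rminus_eq_0, Rabs_R0. apply cond_pos.
Qed.

Lemma continuity_2d_pt_sumR N (F : nat -> R -> R -> R) x y :
  (forall k, (k < N)%nat -> continuity_2d_pt (F k) x y) ->
  continuity_2d_pt (fun u v => sumR N (fun k => F k u v)) x y.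
Proof.
  induction N as [|N IH]; intros HF; simpl; [apply continuity_2d_pt_const|].
  apply (continuity_2d_pt_plus (fun u v => sumR N (fun k => F k u v)) (F N)); auto.
Qed.

Section Variation.

Variables (l : nat) (H : (nat -> R) -> R) (a b : R) (Y w : nat -> R -> R).
Hypotheses (Hdep : depends_on_first l H) (Hsmooth : smoothN l H)
  (HY : forall q, (q < l)%nat -> forall z, continuous (Y q) z)
  (Hw : forall q, (q < l)%nat -> forall z, continuous (w q) z).

Let U (eps z : R) (q : nat) : R := Y q z + eps * w q z.

Let U_continuous s : List.Forall (fun p => (p < l)%nat) s ->
  forall x y, continuity_2d_pt (fun u v => pdN s H (U u v)) x y.
Proof.
  intros Hs x y. apply continuity_2d_pt_contN with l; [apply (Hsmooth s _ Hs)|].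
  intros q Hq. apply (continuity_2d_pt_plus (fun u v => Y q v) (fun u v => u * w q v));
    [apply continuity_2d_pt_snd; auto|].
  apply (continuity_2d_pt_mult (fun u v => u) (fun u v => w q v));
    [apply continuity_2d_pt_id1|apply continuity_2d_pt_snd; auto].
Qed.

Let U_derive eps z : is_derive (fun u => H (U u z)) eps
  (sumR l (fun p => partialN H p (U eps z) * w p z)).
Proof.
  apply (chain_rule l H (fun u => U u z)); [apply (smoothN_C1N l H nil); auto|].
  intros q _. unfold U. auto_derive; auto. ring.
Qed.

Lemma is_derive_RInt_variation :
  is_derive (fun eps => RInt (fun z => H (fun q => Y q z + eps * w q z)) a b) 0
    (RInt (fun z => sumR l (fun p => partialN H p (fun q => Y q z) * w p z)) a b).
Proof.
  replace (fun z => sumR l (fun p => partialN H p (fun q => Y q z) * w p z))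
    with (fun z => Derive (fun u => H (U u z)) 0).
  - apply (is_derive_RInt_param (fun eps z => H (U eps z))).
    + apply filter_forall. intros eps z _. eexists. apply U_derive.
    + intros z _. apply (continuity_2d_pt_ext
        (fun u v => sumR l (fun p => partialN H p (U u v) * w p v))).
      { intros u v. symmetry. apply is_derive_unique, U_derive. }
      apply (continuity_2d_pt_sumR l (fun p u v => partialN H p (U u v) * w p v)). intros p Hp.
      apply (continuity_2d_pt_mult (fun u v => partialN H p (U u v)) (fun u v => w p v)).
      * apply (U_continuous (p :: nil)). constructor; auto.
      * apply continuity_2d_pt_snd; auto.
    + apply filter_forall. intros eps.
      apply (ex_RInt_continuous (V := R_CompleteNormedModule)). intros z _.
      apply (continuity_2d_pt_slice (fun u v => H (U u v))), (U_continuous nil). constructor.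
  - apply functional_extensionality; intro z.
    etransitivity; [apply is_derive_unique, U_derive|].
    apply sumR_ext. intros p _. unfold U. do 3 f_equal.
    apply functional_extensionality; intro q. ring.
Qed.

End Variation.

Lemma Hbar_var_deriv l a b H (Y : nat -> R -> R) :
  depends_on_first l H -> smoothN l H -> (forall q, (q < l)%nat -> forall z, continuous (Y q) z) ->
  is_var_deriv l a b (Hbar a b H) Y (fun p z => partialN H p (fun q => Y q z)).
Proof.
  intros Hdep Hs HY eta Heta. unfold Hbar.
  apply is_derive_RInt_variation; auto.
  intros q Hq. apply smooth1_cont, Heta. auto.
Qed.

Lemma test_fun_zero a b : a < b -> test_fun a b (fun _ => 0).
Proof.
  intros Hab. split; [apply smooth1_const|].
  exists ((a + b) / 2), ((a + b) / 2). repeat split; lra.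
Qed.

Lemma var_deriv_unique N a b F (x g1 g2 : nat -> R -> R) : a < b ->
  (forall i, (i < N)%nat -> forall z, continuous (g1 i) z) ->
  (forall i, (i < N)%nat -> forall z, continuous (g2 i) z) ->
  is_var_deriv N a b F x g1 -> is_var_deriv N a b F x g2 ->
  forall i z, (i < N)%nat -> a <= z <= b -> g1 i z = g2 i z.
Proof.
  intros Hab Hg1 Hg2 D1 D2 i z Hi Hz.
  cut (g1 i z - g2 i z = 0); [lra|].
  apply (fundamental_lemma (fun z => g1 i z - g2 i z) a b); auto.
  { intro y. apply (continuous_minus (g1 i) (g2 i)); auto. }
  intros phi Hphi.
  set (eta := fun k y => if Nat.eqb i k then phi y else 0).
  assert (Heta : test_vec N a b eta).
  { intros k _. unfold eta. destruct (Nat.eqb i k); [auto|apply test_fun_zero; auto]. }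
  assert (Hsum : forall (g : nat -> R -> R) y,
    sumR N (fun k => g k y * eta k y) = g i y * phi y).
  { intros g y. rewrite <- (sumR_kronecker N i (fun k => g k y * phi y)) by auto.
    apply sumR_ext. intros k _. unfold eta. destruct (Nat.eqb i k); ring. }
  assert (E := is_derive_unique _ _ _ (D1 eta Heta)).
  rewrite (is_derive_unique _ _ _ (D2 eta Heta)) in E.
  rewrite (RInt_ext (V := R_CompleteNormedModule) _ _ _ _ (fun y _ => Hsum g1 y)),
          (RInt_ext (V := R_CompleteNormedModule) _ _ _ _ (fun y _ => Hsum g2 y)) in E.
  assert (Hphi_c : forall y, continuous phi y) by (apply smooth1_cont, Hphi).
  rewrite (RInt_ext (V := R_CompleteNormedModule) _ (fun y => g1 i y * phi y - g2 i y * phi y))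
    by (intros; simpl; ring).
  rewrite (RInt_minus (V := R_CompleteNormedModule)), E; [apply Rminus_diag|..];
    apply (ex_RInt_continuous (V := R_CompleteNormedModule)); intros y _.
  - apply (continuous_mult (g1 i) phi); auto.
  - apply (continuous_mult (g2 i) phi); auto.
Qed.

Lemma pd2_app s1 s2 f : pd2 (s1 ++ s2) f = pd2 s1 (pd2 s2 f).
Proof. induction s1 as [|[] s1 IH]; simpl; rewrite ?IH; reflexivity. Qed.

Lemma smooth2_pd2 s f : smooth2 f -> smooth2 (pd2 s f).
Proof. intros Hf s' t z. rewrite <- pd2_app. apply Hf. Qed.

Lemma pd2_z_n j f t z : pd2 (repeat false j) f t z = Derive_n (f t) j z.
Proof.
  revert z. induction j as [|j IH]; intro z; [reflexivity|].
  simpl. apply Derive_ext. intro. apply IH.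
Qed.

Lemma cont2_continuity_2d_pt f t z : cont2 f t z -> continuity_2d_pt f t z.
Proof.
  intros Hf eps. destruct (Hf eps (cond_pos eps)) as [d [Hd Hfd]].
  exists (mkposreal d Hd). auto.
Qed.

Lemma pd2_swap f : smooth2 f -> pd2 (true :: false :: nil) f = pd2 (false :: true :: nil) f.
Proof.
  intros Hf. apply functional_extensionality; intro t. apply functional_extensionality; intro z.
  simpl. apply Schwarz.
  - exists (mkposreal 1 Rlt_0_1). intros u v _ _.
    split; [|split; [|split]];
      [apply (Hf nil u v)|apply (Hf nil u v)|
       apply (Hf (false :: nil) u v)|apply (Hf (true :: nil) u v)].
  - apply cont2_continuity_2d_pt, (Hf (true :: false :: nil) t z).
  - apply cont2_continuity_2d_pt, (Hf (false :: true :: nil) t z).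
Qed.

Lemma pd2_t_z_n j f : smooth2 f ->
  pd2 (true :: repeat false j) f = pd2 (repeat false j ++ true :: nil) f.
Proof.
  intros Hf. induction j as [|j IH]; [reflexivity|].
  change (true :: repeat false (S j)) with ((true :: false :: nil) ++ repeat false j).
  rewrite pd2_app, pd2_swap by (apply smooth2_pd2; auto).
  change (pd2 (false :: nil) (pd2 (true :: repeat false j) f) =
          pd2 (false :: repeat false j ++ true :: nil) f).
  rewrite IH. reflexivity.
Qed.

Lemma smooth2_slice f t : smooth2 f -> smooth1 (f t).
Proof.
  intros Hf k z.
  replace (Derive_n (f t) k) with (fun z => pd2 (repeat false k) f t z)
    by (apply functional_extensionality; intro; apply pd2_z_n).
  split; [apply Hf|].
  apply continuity_pt_filterlim. intros eps Heps.
  destruct (proj2 (proj2 (Hf (repeat false k) t z)) eps Heps) as [d [Hd Hfd]].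
  exists d. split; auto. intros y [_ Hy]. apply Hfd; auto. rewrite Rminus_eq_0, Rabs_R0. auto.
Qed.

Lemma smooth2_slice_Derive_t f t : smooth2 f -> smooth1 (fun z => Derive (fun t' => f t' z) t).
Proof. intros Hf. apply (smooth2_slice (pd2 (true :: nil) f)), smooth2_pd2, Hf. Qed.

Lemma Derive_t_Derive_n f j t z : smooth2 f ->
  Derive (fun t' => Derive_n (f t') j z) t = Derive_n (fun z' => Derive (fun t' => f t' z') t) j z.
Proof.
  intros Hf. transitivity (pd2 (true :: repeat false j) f t z).
  - simpl. apply Derive_ext. intro. symmetry. apply pd2_z_n.
  - rewrite pd2_t_z_n, pd2_app, pd2_z_n by auto. reflexivity.
Qed.

Lemma RInt_sumR_scal N (c : nat -> R) (F : nat -> R -> R) a b :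
  (forall k, (k < N)%nat -> forall z, continuous (F k) z) ->
  RInt (fun z => sumR N (fun k => c k * F k z)) a b = sumR N (fun k => c k * RInt (F k) a b).
Proof.
  intros HF. rewrite (RInt_sumR N (fun k z => c k * F k z)).
  - apply sumR_ext. intros k Hk. apply (RInt_scal (V := R_CompleteNormedModule)).
    apply (ex_RInt_continuous (V := R_CompleteNormedModule)). intros; apply HF; auto.
  - intros k Hk z. apply (continuous_mult (fun _ => c k) (F k)); [apply continuous_const|auto].
Qed.

Lemma smooth1_Jop m P i k f : smooth1 f -> smooth1 (Jop m P i k f).
Proof.
  intros Hf. apply (smooth1_sumR (S m) (fun j z => P j i k * Derive_n f j z)).
  intros j _. apply smooth1_scal, smooth1_Derive_n, Hf.
Qed.

Lemma Jop_sumR m P i k N (F : nat -> R -> R) : (forall q, (q < N)%nat -> smooth1 (F q)) ->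
  Jop m P i k (fun z => sumR N (fun q => F q z)) = fun z => sumR N (fun q => Jop m P i k (F q) z).
Proof.
  intros HF. apply functional_extensionality; intro z. unfold Jop.
  transitivity (sumR (S m) (fun j => sumR N (fun q => P j i k * Derive_n (F q) j z))).
  - apply sumR_ext. intros j _. rewrite Derive_n_sumR by auto. apply sumR_mult_l.
  - apply sumR_swap.
Qed.

Lemma Derive_n_Jop m P i k f jl jr z : smooth1 f ->
  Derive_n (Jop m P i k (fun w => (-1) ^ jr * Derive_n f jr w)) jl z =
  sumR (S m) (fun j => P j i k * (-1) ^ jr * Derive_n f (jl + j + jr) z).
Proof.
  intros Hf. unfold Jop.
  rewrite (Derive_n_sumR (S m)
             (fun j z => P j i k * Derive_n (fun w => (-1) ^ jr * Derive_n f jr w) j z)).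
  - apply sumR_ext. intros j _.
    rewrite Derive_n_scal, Derive_n_comp, Derive_n_scal_l, Derive_n_comp. ring.
  - intros j _. apply smooth1_scal, smooth1_Derive_n, smooth1_scal, smooth1_Derive_n, Hf.
Qed.

Lemma neg1_pow_sign j jl jr : (-1) ^ S j * (-1) ^ jr * (-1) ^ (jl + j + jr) = - (-1) ^ jl.
Proof.
  assert (Hsq : forall n, (-1) ^ n * (-1) ^ n = 1).
  { intro n. rewrite <- Rpow_mult_distr. replace (-1 * -1) with 1 by ring. apply pow1. }
  rewrite !pow_add. simpl pow.
  transitivity (- (-1) ^ jl * ((-1) ^ j * (-1) ^ j) * ((-1) ^ jr * (-1) ^ jr)); [ring|].
  rewrite !Hsq. ring.
Qed.

Lemma RInt_Jop_skew a b m P i k jl jr e f :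
  (forall j, (j <= m)%nat -> P j i k = (-1) ^ (S j) * P j k i) ->
  test_fun a b e -> test_fun a b f ->
  RInt (fun z => e z * Derive_n (Jop m P i k (fun w => (-1) ^ jr * Derive_n f jr w)) jl z) a b =
  - RInt (fun z => Derive_n (Jop m P k i (fun w => (-1) ^ jl * Derive_n e jl w)) jr z * f z) a b.
Proof.
  intros HP He Hf. assert (Hes : smooth1 e) by apply He. assert (Hfs : smooth1 f) by apply Hf.
  rewrite (RInt_ext (V := R_CompleteNormedModule) _
    (fun z => sumR (S m) (fun j => P j i k * (-1) ^ jr * (e z * Derive_n f (jl + j + jr) z)))).
  2: { intros z _. rewrite Derive_n_Jop by auto. rewrite sumR_mult_l.
       apply sumR_ext. intros j _. simpl. ring. }
  rewrite (RInt_ext (V := R_CompleteNormedModule)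
    (fun z => Derive_n (Jop m P k i (fun w => (-1) ^ jl * Derive_n e jl w)) jr z * f z)
    (fun z => sumR (S m) (fun j => P j k i * (-1) ^ jl * (Derive_n e (jl + j + jr) z * f z)))).
  2: { intros z _. rewrite Derive_n_Jop by auto. rewrite sumR_mult_r.
       apply sumR_ext. intros j _. replace (jr + j + jl)%nat with (jl + j + jr)%nat by lia.
       simpl. ring. }
  rewrite !RInt_sumR_scal, <- sumR_opp.
  - apply sumR_ext. intros j Hj.
    rewrite (RInt_parts_test a b f e), HP by (auto; lia).
    rewrite <- (Ropp_involutive ((-1) ^ jl)), <- (neg1_pow_sign j jl jr). ring.
  - intros j _ z. apply (continuous_mult (Derive_n e (jl + j + jr)) f);
      apply smooth1_cont; auto using smooth1_Derive_n.
  - intros j _ z. apply (continuous_mult e (Derive_n f (jl + j + jr)));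
      apply smooth1_cont; auto using smooth1_Derive_n.
Qed.

Lemma smooth1_JJop m P I p q f : smooth1 f -> smooth1 (JJop m P I p q f).
Proof.
  intros Hf. apply smooth1_Derive_n, smooth1_Jop, smooth1_scal, smooth1_Derive_n, Hf.
Qed.

Lemma RInt_sumR2 N M (F : nat -> nat -> R -> R) a b :
  (forall p q, (p < N)%nat -> (q < M)%nat -> forall z, continuous (F p q) z) ->
  RInt (fun z => sumR N (fun p => sumR M (fun q => F p q z))) a b =
  sumR N (fun p => sumR M (fun q => RInt (F p q) a b)).
Proof.
  intros HF. rewrite (RInt_sumR N (fun p z => sumR M (fun q => F p q z))).
  - apply sumR_ext. intros p Hp. apply RInt_sumR. auto.
  - intros p Hp z. apply continuous_sumR. auto.
Qed.

Lemma JJvec_skew a b n m P I e f :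
  (forall j i k, (j <= m)%nat -> (i < n)%nat -> (k < n)%nat ->
      P j i k = (-1) ^ (S j) * P j k i) ->
  (forall p, (p < length I)%nat -> (ip I p < n)%nat) ->
  test_vec (length I) a b e -> test_vec (length I) a b f ->
  RInt (fun z => sumR (length I) (fun p => e p z * JJvec m P I f p z)) a b =
  - RInt (fun z => sumR (length I) (fun p => JJvec m P I e p z * f p z)) a b.
Proof.
  intros HP HI He Hf. set (l := length I).
  assert (Hes : forall p, (p < l)%nat -> smooth1 (e p)) by (intros; apply He; auto).
  assert (Hfs : forall p, (p < l)%nat -> smooth1 (f p)) by (intros; apply Hf; auto).
  rewrite (RInt_ext (V := R_CompleteNormedModule) _
    (fun z => sumR l (fun p => sumR l (fun q => e p z * JJop m P I p q (f q) z))))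
    by (intros; apply sumR_ext; intros; apply sumR_mult_l).
  rewrite (RInt_ext (V := R_CompleteNormedModule)
    (fun z => sumR l (fun p => JJvec m P I e p z * f p z))
    (fun z => sumR l (fun p => sumR l (fun q => JJop m P I q p (e p) z * f q z)))).
  2: { intros z _. unfold JJvec. fold l.
       rewrite (sumR_ext l _ (fun p => sumR l (fun q => JJop m P I p q (e q) z * f p z)))
         by (intros; apply sumR_mult_r).
       apply sumR_swap. }
  rewrite !RInt_sumR2, <- sumR_opp.
  - apply sumR_ext. intros p Hp. rewrite <- sumR_opp. apply sumR_ext. intros q Hq.
    apply RInt_Jop_skew; [intros j Hj; apply HP; auto|apply He; auto|apply Hf; auto].
  - intros p q Hp Hq z. apply (continuous_mult (JJop m P I q p (e p)) (f q));
      apply smooth1_cont; auto using smooth1_JJop.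
  - intros p q Hp Hq z. apply (continuous_mult (e p) (JJop m P I p q (f q)));
      apply smooth1_cont; auto using smooth1_JJop.
Qed.

Definition lift (I : list (nat * nat)) (y : nat -> R -> R) (p : nat) : R -> R :=
  Derive_n (y (ip I p)) (jp I p).

Definition lift_adj (I : list (nat * nat)) (G : nat -> R -> R) (k : nat) (z : R) : R :=
  sumR (length I) (fun q =>
    if Nat.eqb (ip I q) k then (-1) ^ jp I q * Derive_n (G q) (jp I q) z else 0).

Lemma smooth1_if (c : bool) f : smooth1 f -> smooth1 (fun z => if c then f z else 0).
Proof. intros Hf. destruct c; [exact Hf|apply smooth1_const]. Qed.

Lemma smooth1_lift_adj I G k : (forall q, (q < length I)%nat -> smooth1 (G q)) ->
  smooth1 (lift_adj I G k).
Proof.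
  intros HG. apply (smooth1_sumR (length I) (fun q z =>
    if Nat.eqb (ip I q) k then (-1) ^ jp I q * Derive_n (G q) (jp I q) z else 0)).
  intros q Hq. apply smooth1_if, smooth1_scal, smooth1_Derive_n. auto.
Qed.

Lemma lift_plus_scal I (y eta : nat -> R -> R) eps p :
  smooth1 (y (ip I p)) -> smooth1 (eta (ip I p)) ->
  lift I (fun i z => y i z + eps * eta i z) p = fun z => lift I y p z + eps * lift I eta p z.
Proof.
  intros Hy Heta. unfold lift.
  rewrite (Derive_n_plus_smooth (y (ip I p)) (fun z => eps * eta (ip I p) z)), Derive_n_scal;
    auto using smooth1_scal.
Qed.

Lemma lift_adj_pairing n I G (eta : nat -> R -> R) z :
  (forall p, (p < length I)%nat -> (ip I p < n)%nat) ->
  sumR n (fun k => lift_adj I G k z * eta k z) =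
  sumR (length I) (fun q => (-1) ^ jp I q * (Derive_n (G q) (jp I q) z * eta (ip I q) z)).
Proof.
  intros HI. unfold lift_adj.
  rewrite (sumR_ext n _ (fun k => sumR (length I) (fun q => if Nat.eqb (ip I q) k
             then (-1) ^ jp I q * (Derive_n (G q) (jp I q) z * eta k z) else 0))).
  - rewrite sumR_swap. apply sumR_ext. intros q Hq. apply sumR_kronecker. auto.
  - intros k _. rewrite sumR_mult_r. apply sumR_ext. intros q _.
    destruct (Nat.eqb (ip I q) k); ring.
Qed.

Lemma RInt_lift_adj n a b I (G eta : nat -> R -> R) :
  (forall p, (p < length I)%nat -> (ip I p < n)%nat) ->
  (forall p, (p < length I)%nat -> smooth1 (G p)) -> test_vec n a b eta ->
  RInt (fun z => sumR (length I) (fun p => G p z * lift I eta p z)) a b =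
  RInt (fun z => sumR n (fun k => lift_adj I G k z * eta k z)) a b.
Proof.
  intros HI HG Heta.
  assert (Hetas : forall p, (p < length I)%nat -> smooth1 (eta (ip I p)))
    by (intros; apply Heta; auto).
  rewrite (RInt_ext (V := R_CompleteNormedModule)
    (fun z => sumR n (fun k => lift_adj I G k z * eta k z)) _ a b
    (fun z _ => lift_adj_pairing n I G eta z HI)).
  rewrite RInt_sumR, RInt_sumR_scal.
  - apply sumR_ext. intros p Hp. apply RInt_parts_test; auto.
  - intros p Hp z. apply (continuous_mult (Derive_n (G p) (jp I p)) (eta (ip I p)));
      apply smooth1_cont; auto using smooth1_Derive_n.
  - intros p Hp z. apply (continuous_mult (G p) (lift I eta p));
      apply smooth1_cont; unfold lift; auto using smooth1_Derive_n.
Qed.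

Lemma var_deriv_lift n a b I H (y g : nat -> R -> R) :
  (forall p, (p < length I)%nat -> (ip I p < n)%nat) -> depends_on_first (length I) H ->
  (forall i, (i < n)%nat -> smooth1 (y i)) -> (forall p, (p < length I)%nat -> smooth1 (g p)) ->
  is_var_deriv (length I) a b (Hbar a b H) (lift I y) g ->
  is_var_deriv n a b (Hfun a b I H) y (lift_adj I g).
Proof.
  intros HI Hdep Hy Hg Hvd eta Heta.
  rewrite <- (RInt_lift_adj n) by auto.
  apply (is_derive_ext (fun eps => Hbar a b H (fun p z => lift I y p z + eps * lift I eta p z))).
  - intro eps. unfold Hfun, Hbar. apply (RInt_ext (V := R_CompleteNormedModule)). intros z _.
    apply Hdep. intros p Hp.
    assert (E := lift_plus_scal I y eta eps p (Hy _ (HI p Hp)) (proj1 (Heta _ (HI p Hp)))).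
    unfold lift in E |- *. cbv beta in E. rewrite E. reflexivity.
  - apply Hvd. intros p Hp. apply test_fun_Derive_n, Heta. auto.
Qed.

Lemma Jop_if m P i k (c : bool) f :
  Jop m P i k (fun z => if c then f z else 0) = fun z => if c then Jop m P i k f z else 0.
Proof.
  destruct c; [reflexivity|]. apply functional_extensionality; intro z. unfold Jop.
  transitivity (sumR (S m) (fun _ => 0)); [apply sumR_ext; intros j _|apply sumR_zero].
  replace (Derive_n (fun _ => 0) j z) with 0; [ring|].
  destruct j; [reflexivity|symmetry; apply Derive_n_const].
Qed.

Lemma Jop_lift_adj m P i n I G z :
  (forall p, (p < length I)%nat -> (ip I p < n)%nat) ->
  (forall p, (p < length I)%nat -> smooth1 (G p)) ->
  sumR n (fun k => Jop m P i k (lift_adj I G k) z) =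
  sumR (length I) (fun q =>
    Jop m P i (ip I q) (fun w => (-1) ^ jp I q * Derive_n (G q) (jp I q) w) z).
Proof.
  intros HI HG.
  rewrite (sumR_ext n _ (fun k => sumR (length I) (fun q => if Nat.eqb (ip I q) k
             then Jop m P i k (fun w => (-1) ^ jp I q * Derive_n (G q) (jp I q) w) z else 0))).
  - rewrite sumR_swap. apply sumR_ext. intros q Hq.
    apply (sumR_kronecker n (ip I q) (fun k => Jop m P i k _ z)). auto.
  - intros k _. unfold lift_adj. rewrite Jop_sumR.
    + apply sumR_ext. intros q _. rewrite Jop_if. reflexivity.
    + intros q Hq. apply smooth1_if, smooth1_scal, smooth1_Derive_n. auto.
Qed.

Lemma Jop_eq_on m P i k f g a b : a < b -> smooth1 f -> smooth1 g ->
  (forall y, a <= y <= b -> f y = g y) ->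
  forall z, a <= z <= b -> Jop m P i k f z = Jop m P i k g z.
Proof.
  intros Hab Hf Hg Heq z Hz. unfold Jop. apply sumR_ext. intros j _.
  rewrite (Derive_n_eq_on f g a b); auto.
Qed.

Definition grad_bar (H : (nat -> R) -> R) (I : list (nat * nat)) (x : nat -> R -> R -> R)
    (t : R) (p : nat) (z : R) : R :=
  partialN H p (fun q => xbar I x q t z).

Section LiftedSystem.

Variables (a b : R) (n m : nat) (P : nat -> nat -> nat -> R) (I : list (nat * nat))
  (H : (nat -> R) -> R) (x g : nat -> R -> R -> R) (t : R).
Hypotheses (Hab : a < b) (HI : forall p, (p < length I)%nat -> (ip I p < n)%nat)
  (Hdep : depends_on_first (length I) H) (Hsmooth : smoothN (length I) H)
  (Hx : forall i, (i < n)%nat -> smooth2 (x i)) (Hg : forall i, (i < n)%nat -> smooth2 (g i))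
  (Hvd : is_var_deriv n a b (Hfun a b I H) (fun i => x i t) (fun i => g i t)).

Lemma smooth1_xbar p : (p < length I)%nat -> smooth1 (fun z => xbar I x p t z).
Proof. intros Hp. apply smooth1_Derive_n, smooth2_slice, Hx, HI, Hp. Qed.

Lemma smooth1_grad_bar p : (p < length I)%nat -> smooth1 (grad_bar H I x t p).
Proof.
  intros Hp. apply (smooth1_pdN_comp (length I) H (fun q z => xbar I x q t z));
    auto using smooth1_xbar.
Qed.

Lemma xbar_var_deriv :
  is_var_deriv (length I) a b (Hbar a b H) (fun p => xbar I x p t) (grad_bar H I x t).
Proof.
  apply Hbar_var_deriv; auto. intros q Hq. apply smooth1_cont, smooth1_xbar, Hq.
Qed.

Lemma var_deriv_eq_lift_adj k z : (k < n)%nat -> a <= z <= b ->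
  g k t z = lift_adj I (grad_bar H I x t) k z.
Proof.
  intros Hk Hz. apply (var_deriv_unique n a b (Hfun a b I H) (fun i => x i t)
    (fun i => g i t) (lift_adj I (grad_bar H I x t))); auto.
  - intros i Hi. apply smooth1_cont, smooth2_slice, Hg, Hi.
  - intros i _. apply smooth1_cont, smooth1_lift_adj, smooth1_grad_bar.
  - apply var_deriv_lift; auto.
    + intros i Hi. apply smooth2_slice, Hx, Hi.
    + exact smooth1_grad_bar.
    + exact xbar_var_deriv.
Qed.

Lemma Derive_t_xbar p z :
  (forall i z, (i < n)%nat -> a <= z <= b ->
     Derive (fun t' => x i t' z) t = sumR n (fun k => Jop m P i k (g k t) z)) ->
  (p < length I)%nat -> a <= z <= b ->
  Derive (fun t' => xbar I x p t' z) t = JJvec m P I (grad_bar H I x t) p z.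
Proof.
  intros Hdt Hp Hz. set (i := ip I p). assert (Hi : (i < n)%nat) by apply HI, Hp.
  set (gb := grad_bar H I x t).
  assert (Hgb : forall q, (q < length I)%nat -> smooth1 (gb q)) by exact smooth1_grad_bar.
  assert (Hsum_g : smooth1 (fun y => sumR n (fun k => Jop m P i k (g k t) y))).
  { apply smooth1_sumR. intros k Hk. apply smooth1_Jop, smooth2_slice, Hg, Hk. }
  assert (Hsum_gb : smooth1 (fun y => sumR n (fun k => Jop m P i k (lift_adj I gb k) y))).
  { apply smooth1_sumR. intros k Hk. apply smooth1_Jop, smooth1_lift_adj. auto. }
  unfold xbar. rewrite Derive_t_Derive_n by auto.
  rewrite (Derive_n_eq_on (fun y => Derive (fun t' => x i t' y) t)
             (fun y => sumR n (fun k => Jop m P i k (g k t) y)) a b);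
    auto using smooth2_slice_Derive_t.
  rewrite (Derive_n_eq_on (fun y => sumR n (fun k => Jop m P i k (g k t) y))
             (fun y => sumR n (fun k => Jop m P i k (lift_adj I gb k) y)) a b); auto.
  - replace (fun y => sumR n (fun k => Jop m P i k (lift_adj I gb k) y))
      with (fun y => sumR (length I) (fun q =>
              Jop m P i (ip I q) (fun w => (-1) ^ jp I q * Derive_n (gb q) (jp I q) w) y))
      by (apply functional_extensionality; intro y; symmetry; apply Jop_lift_adj; auto).
    rewrite Derive_n_sumR; [reflexivity|].
    intros q Hq. apply smooth1_Jop, smooth1_scal, smooth1_Derive_n, Hgb, Hq.
  - intros y Hy. apply sumR_ext. intros k Hk. apply (Jop_eq_on m P i k _ _ a b); auto.
    + apply smooth2_slice, Hg, Hk.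
    + apply smooth1_lift_adj. auto.
    + intros y' Hy'. apply var_deriv_eq_lift_adj; auto.
Qed.

End LiftedSystem.

Theorem proposition3 (a b : R) (n m md : nat) (P : nat -> nat -> nat -> R)
    (I : list (nat * nat)) (H : (nat -> R) -> R) (x g : nat -> R -> R -> R) (t0 t1 : R) :
  a < b ->
  (* P_j = (-1)^(j+1) P_j^T for j in [0:m] *)
  (forall j i k, (j <= m)%nat -> (i < n)%nat -> (k < n)%nat ->
      P j i k = (-1) ^ (S j) * P j k i) ->
  (* I: distinct pairs in [0:n-1] x [0:md], ordered by nondecreasing j *)
  NoDup I ->
  (forall pr, In pr I -> (fst pr < n)%nat /\ (snd pr <= md)%nat) ->
  (forall p q, (p <= q)%nat -> (q < length I)%nat -> (jp I p <= jp I q)%nat) ->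
  (* H : R^l -> R smooth *)
  depends_on_first (length I) H -> smoothN (length I) H ->
  (* x smooth, solves dx/dt = J (delta_x H(x)) with variational derivative g *)
  (forall i, (i < n)%nat -> smooth2 (x i)) ->
  (forall i, (i < n)%nat -> smooth2 (g i)) ->
  (forall t, t0 < t < t1 ->
      is_var_deriv n a b (Hfun a b I H) (fun i => x i t) (fun i => g i t) /\
      (forall i z, (i < n)%nat -> a <= z <= b ->
         Derive (fun t' => x i t' z) t = sumR n (fun k => Jop m P i k (g k t) z))) ->
  (* conclusion: xbar solves d/dt xbar = JJ delta_xbar Hbar(xbar) ... *)
  (forall t, t0 < t < t1 ->
     exists gb : nat -> R -> R,
       is_var_deriv (length I) a b (Hbar a b H) (fun p => xbar I x p t) gb /\
       (forall p, (p < length I)%nat -> smooth1 (gb p)) /\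
       (forall p z, (p < length I)%nat -> a <= z <= b ->
          Derive (fun t' => xbar I x p t' z) t = JJvec m P I gb p z)) /\
  (* ... and JJ is formally skew-adjoint *)
  (forall e f, test_vec (length I) a b e -> test_vec (length I) a b f ->
     RInt (fun z => sumR (length I) (fun p => e p z * JJvec m P I f p z)) a b =
     - RInt (fun z => sumR (length I) (fun p => JJvec m P I e p z * f p z)) a b).
Proof.
  (* Distinctness and ordering of the index pairs are not needed. *)
  intros Hab HP _ HIrange _ Hdep Hs Hx Hg Hsol.
  assert (HI : forall p, (p < length I)%nat -> (ip I p < n)%nat).
  { intros p Hp. apply (HIrange (nth p I (0, 0)%nat)), nth_In, Hp. }
  split.
  - intros t Ht. destruct (Hsol t Ht) as [Hvd Hdt].
    exists (grad_bar H I x t). split; [|split].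
    + apply (xbar_var_deriv a b n); auto.
    + intros p Hp. apply (smooth1_grad_bar n); auto.
    + intros p z Hp Hz. apply (Derive_t_xbar a b n m P I H x g t); auto.
  - intros e f He Hf. apply (JJvec_skew a b n); auto.
Qed.
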